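(* The minimum size of advice permitting the agent to explore every $n$-node graph in time polynomial in $n$ is $\log\log\log n-\Theta(1)$, both for instance oracles and for map oracles. Precisely: (i) for every constant $c>0$ there are a map oracle with advice size at most $\lfloor\log\log\log n-c\rfloor$ and a deterministic algorithm exploring every $n$-node graph from every starting node in time polynomial in $n$; (ii) for every function $\phi:\mathbb{N}\to\mathbb{N}$ with $\phi(n)\to\infty$, no instance oracle (hence no map oracle) with advice size at most $\log\log\log n-\phi(n)$, together with any deterministic algorithm, explores all $n$-node graphs in time polynomial in $n$.
   Context: Model: a graph is a simple connected undirected graph with $n$ nodes. Nodes are unlabeled; at each node of degree $d$ the incident edges carry distinct port numbers $0,\dots,d-1$, arbitrarily assigned. A mobile agent starts at some node. At each step, located at a node $u$ whose degree it knows, it chooses a port at $u$ and traverses the corresponding edge to a neighbor $w$; upon arrival it learns the port number of this edge at $w$ and the degree of $w$. The agent must visit all nodes and stop; the time of exploration is the number of edge traversals. A deterministic exploration algorithm receives as input a binary string (advice); the size of advice is its length. A map oracle is a function $f$ assigning a binary string $f(G)$ to each port-numbered graph $G$; an instance oracle assigns a binary string $f(G,v)$ to each pair $(G,v)$ with $v$ the starting node. Logarithms are to base 2. *)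

From Stdlib Require Import Reals ZArith Arith List Relations.
Import ListNotations.

(** Nodes are 0..pg_n-1 (labels are invisible to the
    agent).  [pg_deg u] is the degree of u; [pg_nbr u p = (w, q)] means port p
    at u leads to w, where the same edge has port q. *)
Record pgraph := PGraph {
  pg_n   : nat;
  pg_deg : nat -> nat;
  pg_nbr : nat -> nat -> nat * nat
}.

Definition adj (G : pgraph) (u w : nat) : Prop :=
  exists p, p < pg_deg G u /\ fst (pg_nbr G u p) = w.

Definition wf_graph (G : pgraph) : Prop :=
  1 <= pg_n G /\
  (forall u p, u < pg_n G -> p < pg_deg G u ->
     let (w, q) := pg_nbr G u p in
     w < pg_n G /\ q < pg_deg G w /\ pg_nbr G w q = (u, p) /\ w <> u) /\
  (forall u p1 p2, u < pg_n G -> p1 < pg_deg G u -> p2 < pg_deg G u ->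
     fst (pg_nbr G u p1) = fst (pg_nbr G u p2) -> p1 = p2) /\
  (forall u w, u < pg_n G -> w < pg_n G -> clos_refl_trans nat (adj G) u w).

(** An agent history: list of (port taken, entry port at arrival, degree of
    the node reached), in chronological order. *)
Definition history := list (nat * nat * nat).

(** A deterministic exploration algorithm: given the advice, the degree of the
    starting node and the history so far, it either stops ([None]) or takes
    port p ([Some p]). *)
Definition algorithm := list bool -> nat -> history -> option nat.

Fixpoint cfg (G : pgraph) (A : algorithm) (adv : list bool) (v : nat) (k : nat)
  : nat * history :=
  match k with
  | O => (v, [])
  | S k' =>
    let (u, h) := cfg G A adv v k' in
    match A adv (pg_deg G v) h with
    | Some p =>
        if p <? pg_deg G u then
          let (w, q) := pg_nbr G u p in (w, h ++ [(p, q, pg_deg G w)])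
        else (u, h)
    | None => (u, h)
    end
  end.

Definition explores_within (G : pgraph) (A : algorithm) (adv : list bool)
  (v : nat) (T : nat) : Prop :=
  exists t, t <= T /\
    (forall i, i < t -> exists p,
        A adv (pg_deg G v) (snd (cfg G A adv v i)) = Some p /\
        p < pg_deg G (fst (cfg G A adv v i))) /\
    A adv (pg_deg G v) (snd (cfg G A adv v t)) = None /\
    (forall u, u < pg_n G -> exists i, i <= t /\ fst (cfg G A adv v i) = u).

Definition map_oracle := pgraph -> list bool.
Definition instance_oracle := pgraph -> nat -> list bool.

Definition poly_explores_map (f : map_oracle) (A : algorithm) : Prop :=
  exists C k : nat, forall G v, wf_graph G -> v < pg_n G ->
    explores_within G A (f G) v (C * pg_n G ^ k).

Definition poly_explores_inst (f : instance_oracle) (A : algorithm) : Prop :=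
  exists C k : nat, forall G v, wf_graph G -> v < pg_n G ->
    explores_within G A (f G v) v (C * pg_n G ^ k).

Definition lg (x : R) : R := ln x / ln 2.
Definition lll (n : nat) : R := lg (lg (lg (INR n))).

Definition floorR (x : R) : Z := Int_part x.

Definition tends_to_infty (phi : nat -> nat) : Prop :=
  forall M, exists N, forall n, N <= n -> M <= phi n.

From Stdlib Require Import Bool Reals ZArith Arith List Lia Lra Permutation ClassicalEpsilon Classical Relations.
Import ListNotations.

(** Upper bound: a random walk of length [2 n^4] misses a given node with
    probability at most [1/2] (commute-time bound), so a random integer sequence
    of length polynomial in [N] is, with positive probability, a universal
    exploration sequence for the finitely many graphs with at most [N] nodes;
    conditional expectations turn this into an actual sequence.  The oracle
    reveals [i = log2 (log2 n) / B], i.e. about [log log log n - log B] bits, and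
    the agent follows the sequence for [N_i = 2 ^ 2 ^ ((i + 1) B)], which lies
    between [n] and [n ^ (2 ^ B)].

    Lower bound: on an oriented cycle all nodes look alike, so the agent's moves
    depend only on its advice; with equal advice it stops at the same time on
    cycles of sizes [n < m], forcing [m <= poly(n)].  Hence the cycles of sizes
    [2 ^ 2 ^ (s + e j)], [j <= s], need pairwise distinct advice, but advice of
    length [log log log n - phi(n)] offers fewer than [s + 1] strings. *)

Lemma injective_on_le (d n : nat) (f : nat -> nat) :
  (forall i, i < d -> f i < n) ->
  (forall i j, i < d -> j < d -> f i = f j -> i = j) -> d <= n.
Proof.
  intros Hf Hinj.
  rewrite <- (length_seq d 0), <- (length_map f (seq 0 d)), <- (length_seq n 0).
  apply NoDup_incl_length.
  - apply FinFun.Injective_map_NoDup_in; [|apply seq_NoDup].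
    intros i j Hi%in_seq Hj%in_seq. apply Hinj; lia.
  - intros y [i [<- Hi%in_seq]]%in_map_iff. apply in_seq. specialize (Hf i). lia.
Qed.

Lemma pigeonhole (n m : nat) (f : nat -> nat) :
  (forall i, i < m -> f i < n) -> n < m -> exists i j, i < j < m /\ f i = f j.
Proof.
  intros Hf Hnm. apply NNPP. intros Hno.
  enough (m <= n) by lia.
  apply (injective_on_le m n f Hf). intros i j Hi Hj E.
  destruct (lt_eq_lt_dec i j) as [[Hlt|]|Hgt]; auto; exfalso; apply Hno; eauto.
Qed.

Lemma surjective_on_le (n t : nat) (f : nat -> nat) :
  (forall u, u < n -> exists i, i <= t /\ f i = u) -> n <= S t.
Proof.
  intros Hf.
  rewrite <- (length_seq n 0), <- (length_seq (S t) 0), <- (length_map f (seq 0 (S t))).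
  apply NoDup_incl_length; [apply seq_NoDup|].
  intros u Hu%in_seq. destruct (Hf u ltac:(lia)) as [i [Hi <-]].
  apply in_map, in_seq. lia.
Qed.

Section Sums.
Local Open Scope R_scope.

Fixpoint sumR (n : nat) (f : nat -> R) : R :=
  match n with O => 0 | S k => sumR k f + f k end.

Lemma sumR_ext (n : nat) (f g : nat -> R) :
  (forall i, (i < n)%nat -> f i = g i) -> sumR n f = sumR n g.
Proof. induction n as [|n IH]; intros H; simpl; auto. rewrite IH, H; auto. Qed.

Lemma sumR_plus (n : nat) (f g : nat -> R) :
  sumR n (fun i => f i + g i) = sumR n f + sumR n g.
Proof. induction n as [|n IH]; simpl; [lra|]. rewrite IH. lra. Qed.

Lemma sumR_scal_r (n : nat) (c : R) (f : nat -> R) :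
  sumR n (fun i => f i * c) = sumR n f * c.
Proof. induction n as [|n IH]; simpl; [lra|]. rewrite IH. lra. Qed.

Lemma sumR_le (n : nat) (f g : nat -> R) :
  (forall i, (i < n)%nat -> f i <= g i) -> sumR n f <= sumR n g.
Proof.
  induction n as [|n IH]; intros H; simpl; [lra|].
  apply Rplus_le_compat; [apply IH|apply H]; intros; try apply H; lia.
Qed.

Lemma sumR_const (n : nat) (c : R) : sumR n (fun _ => c) = INR n * c.
Proof. induction n as [|n IH]; simpl sumR; [simpl; lra|]. rewrite IH, S_INR. lra. Qed.

Lemma sumR_nonneg (n : nat) (f : nat -> R) :
  (forall i, (i < n)%nat -> 0 <= f i) -> 0 <= sumR n f.
Proof.
  intros H. apply Rle_trans with (sumR n (fun _ => 0)).
  - rewrite sumR_const. lra.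
  - apply sumR_le, H.
Qed.

Lemma sumR_term (n : nat) (f : nat -> R) (i : nat) :
  (forall j, (j < n)%nat -> 0 <= f j) -> (i < n)%nat -> f i <= sumR n f.
Proof.
  induction n as [|n IH]; intros H Hi; [lia|]. simpl.
  destruct (Nat.eq_dec i n) as [->|Hne].
  - assert (0 <= sumR n f) by (apply sumR_nonneg; intros; apply H; lia). lra.
  - assert (f i <= sumR n f) by (apply IH; [intros; apply H|]; lia).
    assert (0 <= f n) by (apply H; lia). lra.
Qed.

Lemma sumR_shift (n : nat) (f : nat -> R) :
  sumR (S n) f = f O + sumR n (fun i => f (S i)).
Proof. induction n as [|n IH]; simpl in *; [lra|]. rewrite IH. lra. Qed.

Lemma sumR_split (a b : nat) (f : nat -> R) :
  sumR (a + b) f = sumR a f + sumR b (fun i => f (a + i)%nat).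
Proof.
  induction b as [|b IH]; simpl; [rewrite Nat.add_0_r; lra|].
  rewrite Nat.add_succ_r. simpl. rewrite IH. lra.
Qed.

Lemma sumR_except (n w : nat) (f : nat -> R) : (w < n)%nat ->
  sumR n (fun x => if Nat.eq_dec x w then 0 else f x) = sumR n f - f w.
Proof.
  induction n as [|n IH]; intros Hw; [lia|]. simpl. destruct (Nat.eq_dec n w) as [<-|Hne].
  - rewrite (sumR_ext n _ f); [lra|].
    intros i Hi. destruct (Nat.eq_dec i n); [lia|auto].
  - rewrite IH; [lra|lia].
Qed.

Lemma sumR_swap (n m : nat) (F : nat -> nat -> R) :
  sumR n (fun i => sumR m (fun j => F i j)) = sumR m (fun j => sumR n (fun i => F i j)).
Proof.
  induction n as [|n IH]; simpl.
  - rewrite sumR_const. lra.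
  - rewrite IH, <- sumR_plus. auto.
Qed.

Lemma sumR_mod (d m : nat) (g : nat -> R) : (0 < d)%nat ->
  sumR (d * m) (fun r => g (r mod d)%nat) = INR m * sumR d g.
Proof.
  intros Hd. induction m as [|m IH].
  - rewrite Nat.mul_0_r. simpl. lra.
  - assert (Hshift : sumR d (fun i => g ((d * m + i) mod d)%nat) = sumR d g).
    { apply sumR_ext. intros i Hi. f_equal.
      rewrite Nat.add_comm, Nat.mul_comm, Nat.Div0.mod_add. apply Nat.mod_small; auto. }
    rewrite Nat.mul_succ_r, sumR_split, IH, S_INR, Hshift. lra.
Qed.

Lemma sumR_lt_exists (n : nat) (f : nat -> R) :
  sumR n f < INR n -> exists r, (r < n)%nat /\ f r < 1.
Proof.
  intros H. apply NNPP. intros Hn.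
  enough (INR n <= sumR n f) by lra.
  rewrite <- (Rmult_1_r (INR n)), <- sumR_const. apply sumR_le. intros i Hi.
  destruct (Rlt_le_dec (f i) 1); auto. exfalso; eauto.
Qed.

(** [avg 0 g = 0], since [/ 0 = 0] in Rocq. *)
Definition avg (d : nat) (g : nat -> R) : R := sumR d g / INR d.

Lemma avg_le (d : nat) (f g : nat -> R) :
  (forall i, (i < d)%nat -> f i <= g i) -> avg d f <= avg d g.
Proof.
  intros H. unfold avg, Rdiv. apply Rmult_le_compat_r.
  - destruct d; [simpl; rewrite Rinv_0; lra|].
    left. apply Rinv_0_lt_compat, lt_0_INR. lia.
  - apply sumR_le, H.
Qed.

Lemma avg_const (d : nat) (c : R) : (0 < d)%nat -> avg d (fun _ => c) = c.
Proof.
  intros Hd. unfold avg. rewrite sumR_const. field. apply not_0_INR. lia.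
Qed.

Lemma avg_bounds (d : nat) (g : nat -> R) :
  (forall i, (i < d)%nat -> 0 <= g i <= 1) -> 0 <= avg d g <= 1.
Proof.
  intros H. destruct d as [|d].
  - unfold avg. simpl. unfold Rdiv. rewrite Rinv_0. lra.
  - rewrite <- (avg_const (S d) 0), <- (avg_const (S d) 1) by lia.
    split; apply avg_le; intros; apply H; auto.
Qed.

Lemma avg_scal_r (d : nat) (g : nat -> R) (c : R) :
  avg d (fun i => g i * c) = avg d g * c.
Proof. unfold avg. rewrite sumR_scal_r. unfold Rdiv. ring. Qed.

Lemma avg_plus_const (d : nat) (g : nat -> R) (c : R) :
  0 <= c -> avg d (fun i => g i + c) <= avg d g + c.
Proof.
  intros Hc. unfold avg. rewrite sumR_plus, sumR_const. destruct d as [|d].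
  - simpl. unfold Rdiv. rewrite Rinv_0. lra.
  - right. field. apply not_0_INR. lia.
Qed.

Lemma avg_mod (d D : nat) (g : nat -> R) : (0 < d)%nat -> Nat.divide d D -> (0 < D)%nat ->
  avg d g = sumR D (fun r => g (r mod d)%nat) / INR D.
Proof.
  intros Hd [k ->] HD. rewrite Nat.mul_comm, sumR_mod by auto. unfold avg.
  rewrite mult_INR. field. split; apply not_0_INR; lia.
Qed.

Definition sumL {A : Type} (l : list A) (f : A -> R) : R :=
  fold_right (fun a s => f a + s) 0 l.

Lemma sumL_app {A : Type} (l1 l2 : list A) (f : A -> R) :
  sumL (l1 ++ l2) f = sumL l1 f + sumL l2 f.
Proof.
  induction l1 as [|a l1 IH]; simpl; [lra|]. unfold sumL in *. simpl. rewrite IH. lra.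
Qed.

Lemma sumL_map {A B : Type} (l : list A) (h : A -> B) (f : B -> R) :
  sumL (map h l) f = sumL l (fun a => f (h a)).
Proof. induction l as [|a l IH]; simpl; auto. unfold sumL in *; simpl. rewrite IH. auto. Qed.

Lemma sumL_perm {A : Type} (l1 l2 : list A) (f : A -> R) :
  Permutation l1 l2 -> sumL l1 f = sumL l2 f.
Proof. intros H. induction H; unfold sumL in *; simpl; lra. Qed.

Lemma sumL_seq (n : nat) (f : nat -> R) : sumL (seq 0 n) f = sumR n f.
Proof.
  induction n as [|n IH]; auto. rewrite seq_S, sumL_app, IH. unfold sumL; simpl. lra.
Qed.

Lemma sumL_ext {A : Type} (l : list A) (f g : A -> R) :
  (forall a, In a l -> f a = g a) -> sumL l f = sumL l g.
Proof.
  induction l as [|a l IH]; intros H; simpl; auto. unfold sumL in *; simpl.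
  rewrite H, IH; simpl; auto.
  intros b Hb. apply H. simpl; auto.
Qed.

Lemma sumL_le {A : Type} (l : list A) (f g : A -> R) :
  (forall a, In a l -> f a <= g a) -> sumL l f <= sumL l g.
Proof.
  induction l as [|a l IH]; intros H; unfold sumL in *; simpl; [lra|].
  apply Rplus_le_compat; [apply H|apply IH]; simpl; auto.
  intros b Hb. apply H. simpl; auto.
Qed.

Lemma sumL_const {A : Type} (l : list A) (c : R) : sumL l (fun _ => c) = INR (length l) * c.
Proof.
  induction l as [|a l IH]; unfold sumL in *; simpl length; [simpl; lra|].
  simpl fold_right. rewrite IH, S_INR. lra.
Qed.

Lemma sumL_nonneg {A : Type} (l : list A) (f : A -> R) :
  (forall a, In a l -> 0 <= f a) -> 0 <= sumL l f.
Proof.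
  intros H. apply Rle_trans with (sumL l (fun _ => 0)).
  - rewrite sumL_const. lra.
  - apply sumL_le, H.
Qed.

Lemma sumL_term {A : Type} (l : list A) (f : A -> R) (a : A) :
  (forall b, In b l -> 0 <= f b) -> In a l -> f a <= sumL l f.
Proof.
  induction l as [|b l IH]; intros H Ha; [destruct Ha|].
  assert (0 <= f b) by (apply H; simpl; auto).
  assert (0 <= sumL l f) by (apply sumL_nonneg; intros; apply H; simpl; auto).
  unfold sumL in *; simpl. destruct Ha as [->|Ha]; [lra|].
  assert (f a <= fold_right (fun a s => f a + s) 0 l).
  { apply IH; auto. intros c Hc. apply H. simpl; auto. }
  lra.
Qed.

Lemma sumL_scal_r {A : Type} (l : list A) (f : A -> R) (c : R) :
  sumL l (fun a => f a * c) = sumL l f * c.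
Proof. induction l as [|a l IH]; unfold sumL in *; simpl; [lra|]. rewrite IH. lra. Qed.

Lemma sumL_sumR_swap {A : Type} (l : list A) (n : nat) (F : A -> nat -> R) :
  sumL l (fun a => sumR n (F a)) = sumR n (fun r => sumL l (fun a => F a r)).
Proof.
  induction l as [|a l IH]; unfold sumL in *; simpl.
  - rewrite sumR_const. lra.
  - rewrite IH, <- sumR_plus. auto.
Qed.

Lemma sumL_flat_map {A B : Type} (l : list A) (g : A -> list B) (f : B -> R) :
  sumL (flat_map g l) f = sumL l (fun a => sumL (g a) f).
Proof. induction l as [|a l IH]; simpl; auto. rewrite sumL_app, IH. auto. Qed.


End Sums.

Definition nbr (G : pgraph) (x p : nat) : nat := fst (pg_nbr G x p).

Section GraphFacts.
Variable G : pgraph.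
Hypothesis HG : wf_graph G.

Lemma wf_nbr (u p : nat) : u < pg_n G -> p < pg_deg G u ->
  nbr G u p < pg_n G /\ snd (pg_nbr G u p) < pg_deg G (nbr G u p) /\
  pg_nbr G (nbr G u p) (snd (pg_nbr G u p)) = (u, p) /\ nbr G u p <> u.
Proof.
  destruct HG as [_ [H _]]. intros Hu Hp. specialize (H u p Hu Hp). unfold nbr.
  destruct (pg_nbr G u p) as [w q]. simpl. tauto.
Qed.

Lemma deg_le_n (u : nat) : u < pg_n G -> pg_deg G u <= pg_n G.
Proof.
  intros Hu. apply (injective_on_le _ _ (nbr G u)).
  - intros i Hi. apply wf_nbr; auto.
  - intros i j Hi Hj E. destruct HG as [_ [_ [H _]]]. apply (H u); auto.
Qed.

Lemma adj_lt_n (u y : nat) : u < pg_n G -> adj G u y -> y < pg_n G.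
Proof. intros Hu [p [Hp <-]]. apply (wf_nbr u p); auto. Qed.

Lemma deg_pos (x w : nat) : x < pg_n G -> w < pg_n G -> x <> w -> 1 <= pg_deg G x.
Proof.
  intros Hx Hw Hne. destruct HG as [_ [_ [_ Hconn]]].
  specialize (Hconn x w Hx Hw). apply clos_rt_rt1n in Hconn.
  inversion Hconn as [|? y [p [Hp _]]]; subst; [congruence|lia].
Qed.

Lemma deg_pos_nontrivial (x : nat) : 2 <= pg_n G -> x < pg_n G -> 1 <= pg_deg G x.
Proof.
  intros Hn Hx. destruct (Nat.eq_dec x 0) as [->|Hne].
  - apply (deg_pos 0 1); lia.
  - apply (deg_pos x 0); lia.
Qed.

End GraphFacts.

(** * Escape probabilities of random walks *)

(** [escape G w t x] is the probability that a simple random walk of [t] steps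
    started at [x] never visits [w]. *)
Fixpoint escape (G : pgraph) (w t x : nat) : R :=
  match t with
  | O => if Nat.eq_dec x w then 0 else 1
  | S t' => if Nat.eq_dec x w then 0
            else avg (pg_deg G x) (fun p => escape G w t' (nbr G x p))
  end.

Section Escape.
Local Open Scope R_scope.
Variable G : pgraph.

Lemma escape_target (w t : nat) : escape G w t w = 0.
Proof. destruct t; simpl; destruct (Nat.eq_dec w w); congruence. Qed.

Lemma escape_bounds (w t x : nat) : 0 <= escape G w t x <= 1.
Proof.
  revert x. induction t as [|t IH]; intros x; simpl; destruct (Nat.eq_dec x w); try lra.
  apply avg_bounds. intros; apply IH.
Qed.

Lemma escape_succ_le (w t x : nat) : escape G w (S t) x <= escape G w t x.
Proof.
  revert x. induction t as [|t IH]; intros x.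
  - simpl. destruct (Nat.eq_dec x w); [lra|].
    apply avg_bounds. intros. apply (escape_bounds w 0).
  - change (escape G w (S (S t)) x) with (if Nat.eq_dec x w then 0
      else avg (pg_deg G x) (fun p => escape G w (S t) (nbr G x p))).
    change (escape G w (S t) x) with (if Nat.eq_dec x w then 0
      else avg (pg_deg G x) (fun p => escape G w t (nbr G x p))).
    destruct (Nat.eq_dec x w); [lra|]. apply avg_le. intros; apply IH.
Qed.

Lemma escape_antitone (w t t' x : nat) : (t <= t')%nat -> escape G w t' x <= escape G w t x.
Proof.
  induction 1 as [|t' _ IH]; [lra|]. pose proof (escape_succ_le w t' x). lra.
Qed.

(** To escape [w] for [s + t] steps from [x], the walk must escape [y] for [s]
    steps or, having reached [y], escape [w] for [t] more steps. *)
Lemma escape_via (w y t s x : nat) :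
  escape G w (s + t) x <= escape G y s x + escape G w t y.
Proof.
  revert x. induction s as [|s IH]; intros x.
  - simpl. destruct (Nat.eq_dec x y) as [->|]; [lra|].
    pose proof (escape_bounds w t x). pose proof (escape_bounds w t y). lra.
  - simpl plus. destruct (Nat.eq_dec x w) as [->|Hxw].
    + rewrite escape_target. pose proof (escape_bounds y (S s) w).
      pose proof (escape_bounds w t y). lra.
    + destruct (Nat.eq_dec x y) as [->|Hxy].
      * rewrite escape_target. pose proof (escape_antitone w t (S (s + t)) y ltac:(lia)). lra.
      * simpl. destruct (Nat.eq_dec x w); [congruence|]. destruct (Nat.eq_dec x y); [congruence|].
        eapply Rle_trans; [|apply avg_plus_const, escape_bounds].
        apply avg_le. intros. apply IH.
Qed.

Hypothesis HG : wf_graph G.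

Lemma escape_add_le (w t : nat) (M : R) :
  (forall y, (y < pg_n G)%nat -> escape G w t y <= M) ->
  forall s x, (x < pg_n G)%nat -> escape G w (s + t) x <= escape G w s x * M.
Proof.
  intros HM s. induction s as [|s IH]; intros x Hx.
  - simpl. destruct (Nat.eq_dec x w) as [->|]; [rewrite escape_target; lra|].
    rewrite Rmult_1_l. auto.
  - simpl. destruct (Nat.eq_dec x w); [lra|].
    rewrite <- avg_scal_r. apply avg_le. intros i Hi. apply IH, wf_nbr; auto.
Qed.

Definition darts : list (nat * nat) :=
  flat_map (fun x => map (fun p => (x, p)) (seq 0 (pg_deg G x))) (seq 0 (pg_n G)).

Lemma in_darts (x p : nat) : In (x, p) darts <-> (x < pg_n G /\ p < pg_deg G x)%nat.
Proof.
  unfold darts. rewrite in_flat_map. split.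
  - intros [y [Hy%in_seq [p' [E Hp%in_seq]]%in_map_iff]]. inversion E; subst. lia.
  - intros [Hx Hp]. exists x. split; [apply in_seq; lia|].
    apply in_map_iff. exists p. split; auto. apply in_seq; lia.
Qed.

Lemma NoDup_darts : NoDup darts.
Proof.
  unfold darts. generalize (seq_NoDup (pg_n G) 0). induction 1 as [|x l Hx _ IH]; simpl.
  - constructor.
  - apply NoDup_app; auto.
    + apply FinFun.Injective_map_NoDup; [intros u v E; inversion E; auto|apply seq_NoDup].
    + intros [y p] [p' [E _]]%in_map_iff [z [Hz [p'' [E' _]]%in_map_iff]]%in_flat_map.
      inversion E; inversion E'; subst. auto.
Qed.

Lemma darts_reverse_perm :
  Permutation (map (fun d => pg_nbr G (fst d) (snd d)) darts) darts.
Proof.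
  apply Permutation_map_same_l.
  - apply FinFun.Injective_map_NoDup_in; [|apply NoDup_darts].
    intros [x p] [y r] [Hx Hp]%in_darts [Hy Hr]%in_darts E. simpl in E.
    destruct (wf_nbr G HG x p Hx Hp) as [_ [_ [E1 _]]].
    destruct (wf_nbr G HG y r Hy Hr) as [_ [_ [E2 _]]].
    unfold nbr in *. rewrite E in E1. rewrite E1 in E2. auto.
  - intros d [[x p] [<- [Hx Hp]%in_darts]]%in_map_iff.
    destruct (wf_nbr G HG x p Hx Hp) as [A [B _]].
    unfold nbr in *. simpl. destruct (pg_nbr G x p) as [y r]. apply in_darts. auto.
Qed.

Lemma sumL_darts (F : nat * nat -> R) :
  sumL darts F = sumR (pg_n G) (fun x => sumR (pg_deg G x) (fun p => F (x, p))).
Proof.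
  unfold darts. rewrite sumL_flat_map, sumL_seq. apply sumR_ext. intros.
  rewrite sumL_map, sumL_seq. auto.
Qed.

Lemma sum_over_darts (F : nat -> R) :
  sumR (pg_n G) (fun x => sumR (pg_deg G x) (fun p => F (nbr G x p))) =
  sumR (pg_n G) (fun x => INR (pg_deg G x) * F x).
Proof.
  transitivity (sumL darts (fun d => F (nbr G (fst d) (snd d)))).
  { rewrite sumL_darts. auto. }
  transitivity (sumL (map (fun d => pg_nbr G (fst d) (snd d)) darts) (fun d => F (fst d))).
  { rewrite sumL_map. auto. }
  rewrite (sumL_perm _ _ _ darts_reverse_perm), sumL_darts.
  apply sumR_ext. intros. simpl. rewrite (sumR_const _ (F i)). lra.
Qed.

(** A truncated expected hitting time of [w]. *)
Definition hit_time (w t x : nat) : R := sumR t (fun s => escape G w s x).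

Lemma hit_time_nonneg (w t x : nat) : 0 <= hit_time w t x.
Proof. apply sumR_nonneg. intros. apply escape_bounds. Qed.

Lemma hit_time_target (w t : nat) : hit_time w t w = 0.
Proof.
  unfold hit_time. rewrite (sumR_ext _ _ (fun _ => 0)); [rewrite sumR_const; lra|].
  intros. apply escape_target.
Qed.

Lemma hit_time_succ (w t x : nat) : x <> w ->
  INR (pg_deg G x) * hit_time w (S t) x =
  INR (pg_deg G x) + sumR (pg_deg G x) (fun p => hit_time w t (nbr G x p)).
Proof.
  intros Hxw. unfold hit_time. rewrite sumR_shift. simpl escape at 1.
  destruct (Nat.eq_dec x w); [congruence|].
  rewrite (sumR_ext t _ (fun s => sumR (pg_deg G x) (fun p => escape G w s (nbr G x p)) * / INR (pg_deg G x))).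
  2:{ intros. simpl. destruct (Nat.eq_dec x w); [congruence|]. reflexivity. }
  rewrite sumR_scal_r, sumR_swap.
  destruct (pg_deg G x) as [|d] eqn:E; [simpl; lra|].
  field. apply not_0_INR. lia.
Qed.

Lemma hit_time_ge (w t y : nat) : INR t * escape G w t y <= hit_time w t y.
Proof.
  induction t as [|t IH]; [unfold hit_time; simpl; lra|].
  unfold hit_time. simpl sumR. fold (hit_time w t y). rewrite S_INR.
  pose proof (escape_succ_le w t y). pose proof (escape_bounds w (S t) y).
  assert (INR t * escape G w (S t) y <= INR t * escape G w t y)
    by (apply Rmult_le_compat_l; auto using pos_INR).
  lra.
Qed.

Definition deg_sum : R := sumR (pg_n G) (fun x => INR (pg_deg G x)).

Lemma deg_sum_le : deg_sum <= INR (pg_n G) * INR (pg_n G).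
Proof.
  unfold deg_sum. rewrite <- sumR_const. apply sumR_le. intros. apply le_INR, deg_le_n; auto.
Qed.

(** The potential [Phi t = sum_x deg x * hit_time w t x] is nondecreasing in [t]
    while [Phi (t + 1) = deg_sum + Phi t - (sum over the neighbours of w)], so
    the hitting times of the neighbours of [w] sum to at most [deg_sum]. *)
Lemma hit_time_nbr_le (w t p : nat) : (w < pg_n G)%nat -> (p < pg_deg G w)%nat ->
  hit_time w t (nbr G w p) <= deg_sum.
Proof.
  intros Hw Hp.
  set (Phi t := sumR (pg_n G) (fun x => INR (pg_deg G x) * hit_time w t x)).
  assert (Hstep : Phi (S t) = deg_sum + Phi t - INR (pg_deg G w)
                              - sumR (pg_deg G w) (fun p => hit_time w t (nbr G w p))).
  { unfold Phi. rewrite (sumR_ext _ _ (fun x => if Nat.eq_dec x w then 0 else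
        INR (pg_deg G x) + sumR (pg_deg G x) (fun p => hit_time w t (nbr G x p)))).
    2:{ intros x _. destruct (Nat.eq_dec x w) as [->|]; [rewrite hit_time_target; lra|].
        apply hit_time_succ; auto. }
    rewrite sumR_except, sumR_plus, sum_over_darts by auto. unfold deg_sum. lra. }
  assert (Hmono : Phi t <= Phi (S t)).
  { unfold Phi. apply sumR_le. intros. apply Rmult_le_compat_l; [apply pos_INR|].
    unfold hit_time. simpl. pose proof (escape_bounds w t i). lra. }
  assert (Hterm : hit_time w t (nbr G w p) <= sumR (pg_deg G w) (fun p => hit_time w t (nbr G w p)))
    by (apply (sumR_term _ (fun p => hit_time w t (nbr G w p))); auto using hit_time_nonneg).
  pose proof (pos_INR (pg_deg G w)). lra.
Qed.

(** Markov's inequality for the hitting time from a neighbour, which is at most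
    [deg_sum <= n ^ 2]. *)
Lemma escape_nbr_le (z p : nat) : (z < pg_n G)%nat -> (p < pg_deg G z)%nat ->
  escape G z (2 * pg_n G ^ 3) (nbr G z p) <= / (2 * INR (pg_n G)).
Proof.
  intros Hz Hp. assert (Hn : 0 < INR (pg_n G)) by (apply lt_0_INR; lia).
  set (n := INR (pg_n G)) in *.
  assert (Hcube : 0 < 2 * n ^ 3) by (apply Rmult_lt_0_compat; [lra|apply pow_lt; lra]).
  pose proof (hit_time_ge z (2 * pg_n G ^ 3) (nbr G z p)) as Hge.
  pose proof (hit_time_nbr_le z (2 * pg_n G ^ 3) p Hz Hp).
  pose proof deg_sum_le as H0.
  rewrite mult_INR, pow_INR in Hge. replace (INR 2) with 2 in Hge by (simpl; lra).
  apply Rmult_le_reg_r with (2 * n ^ 3); auto.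
  replace (/ (2 * n) * (2 * n ^ 3)) with (n * n) by (field; lra).
  fold n in Hge, H0 |- *. lra.
Qed.

End Escape.

Definition path (G : pgraph) (k x w : nat) : Prop :=
  exists f : nat -> nat, f O = x /\ f k = w /\ forall i, (i < k)%nat -> adj G (f i) (f (S i)).

Lemma path_of_clos_rt (G : pgraph) (x w : nat) :
  clos_refl_trans nat (adj G) x w -> exists k, path G k x w.
Proof.
  intros H. apply clos_rt_rt1n in H. induction H as [|x y w Hxy _ [k [f [F0 [Fk Fa]]]]].
  - exists O, (fun _ => x). repeat split; auto. intros; lia.
  - exists (S k), (fun i => match i with O => x | S i' => f i' end).
    repeat split; auto. intros [|i] Hi; [rewrite F0; auto|apply Fa; lia].
Qed.

Section Paths.
Variable G : pgraph.
Hypothesis HG : wf_graph G.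

Lemma path_in_range (k : nat) (f : nat -> nat) : f O < pg_n G ->
  (forall i, i < k -> adj G (f i) (f (S i))) -> forall i, i <= k -> f i < pg_n G.
Proof.
  intros H0 Ha. induction i as [|i IH]; intros; auto.
  apply (adj_lt_n G HG (f i)); [apply IH; lia|apply Ha; lia].
Qed.

(** A walk visiting some node twice can be shortened by cutting out the loop. *)
Lemma path_shorten (k x w : nat) : x < pg_n G -> path G k x w ->
  exists k', k' < pg_n G /\ path G k' x w.
Proof.
  induction k as [k IH] using (well_founded_induction lt_wf).
  intros Hx [f [F0 [Fk Fa]]].
  destruct (lt_dec k (pg_n G)) as [Hk|Hk]; [exists k; split; auto; exists f; auto|].
  assert (Hlt : forall i, i < S k -> f i < pg_n G)
    by (intros; apply (path_in_range k); auto; [rewrite F0; auto|lia]).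
  destruct (pigeonhole (pg_n G) (S k) f Hlt ltac:(lia)) as [i [j [Hij Hf]]].
  apply (IH (k - (j - i))); [lia|auto|].
  exists (fun m => if m <=? i then f m else f (m + (j - i))).
  repeat split.
  - simpl. auto.
  - destruct (Nat.leb_spec (k - (j - i)) i).
    + replace (k - (j - i)) with i by lia. replace k with j in Fk by lia. congruence.
    + replace (k - (j - i) + (j - i)) with k by lia. auto.
  - intros m Hm. destruct (Nat.leb_spec m i); destruct (Nat.leb_spec (S m) i).
    + apply Fa; lia.
    + replace m with i by lia. rewrite Hf. replace (S i + (j - i)) with (S j) by lia. apply Fa; lia.
    + lia.
    + replace (S m + (j - i)) with (S (m + (j - i))) by lia. apply Fa; lia.
Qed.

Local Open Scope R_scope.

Lemma escape_along_path (w : nat) : (w < pg_n G)%nat -> forall k f,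
  (f O < pg_n G)%nat -> f k = w -> (forall i, (i < k)%nat -> adj G (f i) (f (S i))) ->
  escape G w (k * (2 * pg_n G ^ 3)) (f O) <= INR k * / (2 * INR (pg_n G)).
Proof.
  intros Hw. induction k as [|k IH]; intros f H0 Hk Ha.
  - rewrite Hk, escape_target. simpl. lra.
  - rewrite Nat.mul_succ_l, Nat.add_comm.
    eapply Rle_trans; [apply (escape_via G w (f 1%nat) (k * (2 * pg_n G ^ 3)) _ (f O))|].
    destruct (Ha O ltac:(lia)) as [p [Hp E]].
    destruct (wf_nbr G HG (f O) p H0 Hp) as [A [B [C _]]]. unfold nbr in *. rewrite E in *.
    assert (Hnbr := escape_nbr_le G HG (f 1%nat) (snd (pg_nbr G (f O) p)) A B).
    unfold nbr in Hnbr. rewrite C in Hnbr. cbn [fst] in Hnbr.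
    assert (Hrest : escape G w (k * (2 * pg_n G ^ 3)) (f 1%nat) <= INR k * / (2 * INR (pg_n G))).
    { apply (IH (fun i => f (S i))); auto. intros i Hi. apply Ha. lia. }
    rewrite S_INR. lra.
Qed.

Lemma escape_half (w x T : nat) : (w < pg_n G)%nat -> (x < pg_n G)%nat ->
  (2 * pg_n G ^ 4 <= T)%nat -> escape G w T x <= / 2.
Proof.
  intros Hw Hx HT.
  assert (Hc : clos_refl_trans nat (adj G) x w) by (apply HG; auto).
  destruct (path_of_clos_rt G x w Hc) as [k Hp].
  destruct (path_shorten k x w Hx Hp) as [k' [Hk' [f [F0 [Fk Fa]]]]].
  assert (Hq := escape_along_path w Hw k' f ltac:(rewrite F0; auto) Fk Fa). rewrite F0 in Hq.
  assert (Hle : (k' * (2 * pg_n G ^ 3) <= T)%nat).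
  { eapply Nat.le_trans; [|apply HT].
    replace (2 * pg_n G ^ 4)%nat with (pg_n G * (2 * pg_n G ^ 3))%nat by (simpl; ring).
    apply Nat.mul_le_mono_r. lia. }
  pose proof (escape_antitone G w _ T x Hle).
  assert (Hn : 0 < INR (pg_n G)) by (apply lt_0_INR; lia).
  assert (INR k' <= INR (pg_n G)) by (apply le_INR; lia).
  assert (INR k' * / (2 * INR (pg_n G)) <= / 2).
  { apply Rmult_le_reg_r with (2 * INR (pg_n G)); [lra|].
    rewrite Rmult_assoc, Rinv_l by lra. field_simplify; lra. }
  lra.
Qed.

Lemma escape_geometric (w T : nat) : (w < pg_n G)%nat -> (2 * pg_n G ^ 4 <= T)%nat ->
  forall K x, (x < pg_n G)%nat -> escape G w (K * T) x <= (/ 2) ^ K.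
Proof.
  intros Hw HT. induction K as [|K IH]; intros x Hx.
  - apply (escape_bounds G w 0 x).
  - replace (S K * T)%nat with (K * T + T)%nat by lia.
    eapply Rle_trans; [apply (escape_add_le G HG w T (/ 2)); auto|].
    { intros. apply escape_half; auto. }
    simpl. pose proof (IH x Hx). pose proof (escape_bounds G w (K * T) x). nra.
Qed.

End Paths.

(** * Universal exploration sequences *)

Definition step (G : pgraph) (x r : nat) : nat :=
  if pg_deg G x =? 0 then x else nbr G x (r mod pg_deg G x).

Fixpoint avoids (G : pgraph) (w x : nat) (s : list nat) : Prop :=
  x <> w /\ match s with [] => True | r :: s' => avoids G w (step G x r) s' end.

Lemma step_lt_n (G : pgraph) (x r : nat) : wf_graph G -> x < pg_n G -> step G x r < pg_n G.
Proof.
  intros HG Hx. unfold step. destruct (Nat.eqb_spec (pg_deg G x) 0); auto.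
  apply wf_nbr; auto. apply Nat.mod_upper_bound; auto.
Qed.

Record task := Task { task_graph : pgraph; task_target : nat; task_start : nat }.

(** Solved tasks stay put, keeping their escape probability [0]. *)
Definition advance (r : nat) (t : task) : task :=
  if task_start t =? task_target t then t
  else Task (task_graph t) (task_target t) (step (task_graph t) (task_start t) r).

Definition task_avoids (t : task) (s : list nat) : Prop :=
  avoids (task_graph t) (task_target t) (task_start t) s.

Lemma task_avoids_cons (r : nat) (s : list nat) (t : task) :
  task_avoids t (r :: s) -> task_avoids (advance r t) s.
Proof.
  unfold task_avoids, advance. simpl. intros [Hne Hs].
  destruct (Nat.eqb_spec (task_start t) (task_target t)); [congruence|auto].
Qed.

(** Tasks on which [D] is a common multiple of all degrees: for them, a
    uniformly random [r < D] takes a uniformly random port. *)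
Definition task_ok (D : nat) (t : task) : Prop :=
  wf_graph (task_graph t) /\ task_start t < pg_n (task_graph t) /\
  task_target t < pg_n (task_graph t) /\
  (forall u, u < pg_n (task_graph t) -> 1 <= pg_deg (task_graph t) u ->
     Nat.divide (pg_deg (task_graph t) u) D).

Lemma task_ok_advance (D r : nat) (t : task) : task_ok D t -> task_ok D (advance r t).
Proof.
  unfold advance. destruct (Nat.eqb_spec (task_start t) (task_target t)); auto.
  intros (HG & Hx & Hw & Hdiv). unfold task_ok; simpl. auto using step_lt_n.
Qed.

Definition task_escape (L : nat) (t : task) : R :=
  escape (task_graph t) (task_target t) L (task_start t).

Section Derandomize.
Local Open Scope R_scope.
Variable D : nat.
Hypothesis HD : (0 < D)%nat.

Lemma task_escape_succ (L : nat) (t : task) : task_ok D t ->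
  task_escape (S L) t = sumR D (fun r => task_escape L (advance r t)) / INR D.
Proof.
  intros (HG & Hx & Hw & Hdiv). unfold task_escape, advance. simpl escape.
  destruct (Nat.eq_dec (task_start t) (task_target t)) as [Heq|Hne].
  - destruct (Nat.eqb_spec (task_start t) (task_target t)); [|congruence].
    rewrite (sumR_ext D _ (fun _ => 0)), sumR_const; [unfold Rdiv; ring|].
    intros. rewrite Heq. apply escape_target.
  - destruct (Nat.eqb_spec (task_start t) (task_target t)); [congruence|].
    assert (Hd := deg_pos _ HG _ _ Hx Hw Hne).
    rewrite (avg_mod _ D) by auto. f_equal. apply sumR_ext. intros r _.
    unfold step. simpl. destruct (Nat.eqb_spec (pg_deg (task_graph t) (task_start t)) 0); [lia|auto].
Qed.

(** The method of conditional expectations: if the escape probabilities of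
    all tasks sum to less than [1], some choice of the first integer keeps the
    sum below [1] for the remaining steps. *)
Lemma universal_sequence_of_escape_lt_1 (L : nat) (tasks : list task) :
  (forall t, In t tasks -> task_ok D t) -> sumL tasks (task_escape L) < 1 ->
  exists s, length s = L /\ forall t, In t tasks -> ~ task_avoids t s.
Proof.
  revert tasks. induction L as [|L IH]; intros tasks Hok Hsum.
  - exists []. split; auto. intros t Ht [Hne _].
    assert (task_escape 0 t <= sumL tasks (task_escape 0))
      by (apply sumL_term; auto; intros; apply escape_bounds).
    assert (task_escape 0 t = 1).
    { unfold task_escape. simpl. destruct (Nat.eq_dec (task_start t) (task_target t)); tauto. }
    lra.
  - assert (Hexp : sumL tasks (task_escape (S L))
                   = sumR D (fun r => sumL (map (advance r) tasks) (task_escape L)) / INR D).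
    { rewrite (sumL_ext _ _ (fun t => sumR D (fun r => task_escape L (advance r t)) * / INR D))
        by (intros; apply task_escape_succ; auto).
      rewrite sumL_scal_r, sumL_sumR_swap. unfold Rdiv. f_equal.
      apply sumR_ext. intros. symmetry. apply sumL_map. }
    assert (HD' : 0 < INR D) by (apply lt_0_INR; lia).
    assert (Hlt : sumR D (fun r => sumL (map (advance r) tasks) (task_escape L)) < INR D).
    { apply Rmult_lt_reg_r with (/ INR D); [apply Rinv_0_lt_compat; auto|].
      rewrite Rinv_r by lra. rewrite Hexp in Hsum. exact Hsum. }
    destruct (sumR_lt_exists _ _ Hlt) as [r [_ Hr]].
    destruct (IH (map (advance r) tasks)) as [s [Hlen Hs]]; auto.
    { intros t' [t [<- Ht]]%in_map_iff. apply task_ok_advance; auto. }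
    exists (r :: s). split; [simpl; auto|].
    intros t Ht Hav. apply (Hs (advance r t)); [apply in_map; auto|].
    apply task_avoids_cons; auto.
Qed.

End Derandomize.

(** * Graphs with at most [N] nodes as tables *)

Fixpoint all_tuples (M K : nat) : list (list nat) :=
  match M with
  | O => [[]]
  | S M' => flat_map (fun a => map (cons a) (all_tuples M' K)) (seq 0 K)
  end.

Lemma length_all_tuples (M K : nat) : length (all_tuples M K) = K ^ M.
Proof.
  induction M as [|M IH]; simpl; auto.
  rewrite (flat_map_constant_length (c := K ^ M)), length_seq; auto.
  intros. rewrite length_map; auto.
Qed.

Lemma in_all_tuples (M K : nat) (l : list nat) :
  length l = M -> (forall x, In x l -> x < K) -> In l (all_tuples M K).
Proof.
  revert l. induction M as [|M IH]; intros [|a l] Hl Hx; simpl in *; try lia; auto.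
  apply in_flat_map. exists a. split; [apply in_seq; specialize (Hx a (or_introl eq_refl)); lia|].
  apply in_map, IH; auto.
Qed.

Lemma nth_map_seq (f : nat -> nat) (N i : nat) : i < N -> nth i (map f (seq 0 N)) 0 = f i.
Proof.
  intros Hi. rewrite nth_indep with (d' := f 0) by (rewrite length_map, length_seq; auto).
  rewrite map_nth, seq_nth; auto.
Qed.

Lemma in_map_seq_lt (f : nat -> nat) (N K : nat) :
  (forall i, i < N -> f i < K) -> forall x, In x (map f (seq 0 N)) -> x < K.
Proof. intros Hf x [i [<- Hi%in_seq]]%in_map_iff. apply Hf. lia. Qed.

(** The graph on [n] nodes with degree list [dl] and neighbour table [nl]; the
    entry [u * N + p] of [nl] encodes the far end [(w, q)] of port [p] at [u]
    as [w * N + q]. *)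
Definition table_graph (N n : nat) (dl nl : list nat) : pgraph :=
  PGraph n (fun u => nth u dl 0) (fun u p => let c := nth (u * N + p) nl 0 in (c / N, c mod N)).

(** Beyond its nodes and ports a [pgraph] is junk, ignored by [agree]. *)
Definition agree (G H : pgraph) : Prop :=
  pg_n G = pg_n H /\ (forall u, u < pg_n G -> pg_deg G u = pg_deg H u) /\
  (forall u p, u < pg_n G -> p < pg_deg G u -> pg_nbr G u p = pg_nbr H u p).

Lemma agree_wf (G H : pgraph) : wf_graph G -> agree G H -> wf_graph H.
Proof.
  intros HG [En [Ed Eb]]. pose proof HG as (H1 & H2 & H3 & H4).
  split; [|split; [|split]].
  - lia.
  - intros u p Hu Hp. rewrite <- En in Hu. rewrite <- Ed in Hp by auto. rewrite <- Eb by auto.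
    specialize (H2 u p Hu Hp). destruct (pg_nbr G u p) as [w q]. destruct H2 as [A [B [C D]]].
    rewrite <- En, <- Ed, <- Eb by auto. auto.
  - intros u p1 p2 Hu Hp1 Hp2 E. rewrite <- En in Hu. rewrite <- Ed in Hp1, Hp2 by auto.
    rewrite <- !Eb in E by auto. apply (H3 u); auto.
  - intros u w Hu Hw. rewrite <- En in Hu, Hw. specialize (H4 u w Hu Hw).
    apply clos_rt_rt1n in H4. apply clos_rt1n_rt. clear H1 H2 H3.
    induction H4 as [|x y z [p [Hp E]] _ IH]; [constructor|].
    assert (y < pg_n G) by (apply (adj_lt_n G HG x); [auto|exists p; auto]).
    econstructor 2; [|apply IH; auto].
    exists p. rewrite <- Ed, <- Eb by auto. auto.
Qed.

Lemma agree_avoids (G H : pgraph) (w : nat) (s : list nat) (x : nat) :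
  wf_graph G -> agree G H -> x < pg_n G -> avoids G w x s <-> avoids H w x s.
Proof.
  intros HG Ha. revert x. induction s as [|r s IH]; intros x Hx; simpl; [tauto|].
  assert (Estep : step G x r = step H x r).
  { destruct Ha as [_ [Ed Eb]]. unfold step, nbr. rewrite <- Ed by auto.
    destruct (Nat.eqb_spec (pg_deg G x) 0); auto.
    rewrite Eb; auto. apply Nat.mod_upper_bound; auto. }
  rewrite <- Estep, IH by (apply step_lt_n; auto). tauto.
Qed.

Definition degree_table (N : nat) (G : pgraph) : list nat :=
  map (fun u => if u <? pg_n G then pg_deg G u else 0) (seq 0 N).

Definition nbr_table (N : nat) (G : pgraph) : list nat :=
  map (fun c => if (c / N <? pg_n G) && (c mod N <? pg_deg G (c / N)) then
                  fst (pg_nbr G (c / N) (c mod N)) * N + snd (pg_nbr G (c / N) (c mod N))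
                else 0)
      (seq 0 (N * N)).

Definition table_of (N : nat) (G : pgraph) : pgraph :=
  table_graph N (pg_n G) (degree_table N G) (nbr_table N G).

Lemma div_mod_pair (N a b : nat) : b < N -> (a * N + b) / N = a /\ (a * N + b) mod N = b.
Proof.
  intros Hb. split.
  - rewrite Nat.div_add_l by lia. rewrite Nat.div_small by lia. lia.
  - rewrite Nat.add_comm, Nat.Div0.mod_add. apply Nat.mod_small. lia.
Qed.

Lemma agree_table_of (N : nat) (G : pgraph) : wf_graph G -> pg_n G <= N -> agree G (table_of N G).
Proof.
  intros HG HN. unfold table_of, table_graph, degree_table, nbr_table. split; [|split]; simpl; auto.
  - intros u Hu. rewrite nth_map_seq by lia. destruct (Nat.ltb_spec u (pg_n G)); lia.
  - intros u p Hu Hp. assert (Hd := deg_le_n G HG u Hu).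
    rewrite nth_map_seq by nia. destruct (div_mod_pair N u p ltac:(lia)) as [-> ->].
    destruct (Nat.ltb_spec u (pg_n G)); [|lia]. destruct (Nat.ltb_spec p (pg_deg G u)); [|lia]. simpl.
    destruct (wf_nbr G HG u p Hu Hp) as [A [B _]]. unfold nbr in *.
    assert (Hd2 := deg_le_n G HG _ A).
    destruct (pg_nbr G u p) as [w q]. simpl in *.
    destruct (div_mod_pair N w q ltac:(lia)) as [-> ->]. auto.
Qed.

Definition table_tasks (N : nat) : list task :=
  flat_map (fun n =>
  flat_map (fun dl =>
  flat_map (fun nl =>
  flat_map (fun w =>
  map (fun x => Task (table_graph N n dl nl) w x)
  (seq 0 N)) (seq 0 N)) (all_tuples (N * N) (N * N))) (all_tuples N (S N))) (seq 0 (S N)).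

Lemma length_table_tasks (N : nat) :
  length (table_tasks N) = S N * (S N ^ N * ((N * N) ^ (N * N) * (N * N))).
Proof.
  unfold table_tasks.
  rewrite (flat_map_constant_length (c := S N ^ N * ((N * N) ^ (N * N) * (N * N)))), length_seq; auto.
  intros. rewrite (flat_map_constant_length (c := (N * N) ^ (N * N) * (N * N))), length_all_tuples; auto.
  intros. rewrite (flat_map_constant_length (c := N * N)), length_all_tuples; auto.
  intros. rewrite (flat_map_constant_length (c := N)), length_seq; auto.
  intros. rewrite length_map, length_seq. auto.
Qed.

Lemma table_of_in_table_tasks (N : nat) (G : pgraph) (w x : nat) :
  wf_graph G -> pg_n G <= N -> w < pg_n G -> x < pg_n G ->
  In (Task (table_of N G) w x) (table_tasks N).
Proof.
  intros HG HN Hw Hx. unfold table_tasks, table_of.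
  apply in_flat_map. exists (pg_n G). split; [apply in_seq; lia|].
  apply in_flat_map. exists (degree_table N G). split.
  { apply in_all_tuples; [unfold degree_table; rewrite length_map, length_seq; auto|].
    apply in_map_seq_lt. intros i Hi.
    destruct (Nat.ltb_spec i (pg_n G)) as [Hi'|]; [|lia].
    pose proof (deg_le_n G HG i Hi'). lia. }
  apply in_flat_map. exists (nbr_table N G). split.
  { apply in_all_tuples; [unfold nbr_table; rewrite length_map, length_seq; auto|].
    apply in_map_seq_lt. intros c Hc.
    destruct (Nat.ltb_spec (c / N) (pg_n G)) as [Hu|]; simpl; [|nia].
    destruct (Nat.ltb_spec (c mod N) (pg_deg G (c / N))) as [Hp|]; simpl; [|nia].
    destruct (wf_nbr G HG _ _ Hu Hp) as [A [B _]]. unfold nbr in *.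
    pose proof (deg_le_n G HG _ A). nia. }
  apply in_flat_map. exists w. split; [apply in_seq; lia|].
  apply in_map, in_seq. lia.
Qed.

Definition table_bits (N : nat) : nat := 2 * N ^ 3 + N * N + 3 * N + 1.

Lemma length_table_tasks_lt (N : nat) : 1 <= N -> length (table_tasks N) < 2 ^ table_bits N.
Proof.
  intros HN. rewrite length_table_tasks. unfold table_bits.
  assert (A : S N <= 2 ^ N) by (apply Nat.pow_gt_lin_r; lia).
  assert (B : N * N <= 2 ^ (2 * N)).
  { replace (2 * N) with (N + N) by lia. rewrite Nat.pow_add_r.
    pose proof (Nat.pow_gt_lin_r 2 N ltac:(lia)). apply Nat.mul_le_mono; lia. }
  assert (C : S N ^ N <= 2 ^ (N * N)) by (rewrite (Nat.pow_mul_r 2); apply Nat.pow_le_mono_l; auto).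
  assert (D : (N * N) ^ (N * N) <= 2 ^ (2 * N * (N * N)))
    by (rewrite (Nat.pow_mul_r 2); apply Nat.pow_le_mono_l; auto).
  eapply Nat.le_lt_trans.
  { apply Nat.mul_le_mono; [apply A|]. apply Nat.mul_le_mono; [apply C|].
    apply Nat.mul_le_mono; [apply D|apply B]. }
  rewrite <- !Nat.pow_add_r. apply Nat.pow_lt_mono_r; [lia|]. simpl. nia.
Qed.

Lemma divide_fact (N d : nat) : 1 <= d -> d <= N -> Nat.divide d (fact N).
Proof.
  induction N as [|N IH]; intros Hd HdN; [lia|]. change (fact (S N)) with (S N * fact N).
  destruct (Nat.eq_dec d (S N)) as [->|Hne].
  - apply Nat.divide_factor_l.
  - apply Nat.divide_mul_r, IH; lia.
Qed.

Definition good_table_task (N : nat) (t : task) : Prop :=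
  task_ok (fact N) t /\ pg_n (task_graph t) <= N.

Definition good_table_tasks (N : nat) : list task :=
  filter (fun t => if excluded_middle_informative (good_table_task N t) then true else false)
         (table_tasks N).

Lemma in_good_table_tasks (N : nat) (t : task) :
  In t (good_table_tasks N) <-> In t (table_tasks N) /\ good_table_task N t.
Proof.
  unfold good_table_tasks. rewrite filter_In.
  destruct (excluded_middle_informative (good_table_task N t)); intuition congruence.
Qed.

Lemma table_of_good (N : nat) (G : pgraph) (w x : nat) :
  wf_graph G -> pg_n G <= N -> w < pg_n G -> x < pg_n G ->
  In (Task (table_of N G) w x) (good_table_tasks N).
Proof.
  intros HG HN Hw Hx. apply in_good_table_tasks. split; [apply table_of_in_table_tasks; auto|].
  assert (Ha := agree_table_of N G HG HN). pose proof Ha as [En [Ed _]].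
  unfold good_table_task, task_ok. cbn [task_graph task_target task_start]. rewrite <- En.
  split; [|auto]. split; [apply (agree_wf G); auto|]. do 2 (split; [auto|]).
  intros u Hu Hd. rewrite <- Ed in * by auto. apply divide_fact; auto.
  pose proof (deg_le_n G HG u Hu). lia.
Qed.

Definition ues_length (N : nat) : nat := table_bits N * (2 * N ^ 4).

Lemma sum_escape_good_table_tasks_lt_1 (N : nat) : 1 <= N ->
  (sumL (good_table_tasks N) (task_escape (ues_length N)) < 1)%R.
Proof.
  intros HN.
  assert (Hhalf : (0 < (/ 2) ^ table_bits N)%R) by (apply pow_lt; lra).
  assert (Hprod : ((/ 2) ^ table_bits N * 2 ^ table_bits N = 1)%R)
    by (rewrite <- Rpow_mult_distr, Rinv_l by lra; apply pow1).
  assert (Hcount : (INR (length (good_table_tasks N)) < 2 ^ table_bits N)%R).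
  { eapply Rle_lt_trans; [apply le_INR, filter_length_le|].
    rewrite <- (pow_INR 2). replace (INR 2) with 2%R by (simpl; lra).
    apply lt_INR, length_table_tasks_lt; auto. }
  eapply Rle_lt_trans.
  - apply (sumL_le _ _ (fun _ => (/ 2) ^ table_bits N)%R).
    intros t [_ [[HG [Hx [Hw _]]] Hn]]%in_good_table_tasks.
    apply escape_geometric; auto. apply Nat.mul_le_mono_l, Nat.pow_le_mono_l. auto.
  - rewrite sumL_const. nra.
Qed.

Lemma universal_sequence_exists (N : nat) : 1 <= N -> exists s : list nat,
  length s = ues_length N /\
  forall G v w, wf_graph G -> pg_n G <= N -> v < pg_n G -> w < pg_n G -> ~ avoids G w v s.
Proof.
  intros HN.
  destruct (universal_sequence_of_escape_lt_1 (fact N) (lt_O_fact N) (ues_length N)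
              (good_table_tasks N)) as [s [Hlen Hs]].
  - intros t [_ [Hok _]]%in_good_table_tasks. auto.
  - apply sum_escape_good_table_tasks_lt_1; auto.
  - exists s. split; auto. intros G v w HG HN' Hv Hw Hav.
    apply (Hs _ (table_of_good N G w v HG HN' Hw Hv)). unfold task_avoids. cbn.
    apply (agree_avoids G); auto. apply agree_table_of; auto.
Qed.

(** The degree of the current node: the last entry of the history records it. *)
Definition current_degree (d0 : nat) (h : history) : nat := last (map snd h) d0.

Definition follow (s : list nat) : algorithm := fun _ d0 h =>
  if length h <? length s then
    (let d := current_degree d0 h in if d =? 0 then None else Some (nth (length h) s 0 mod d))
  else None.

Fixpoint walk_node (G : pgraph) (x : nat) (s : list nat) (i : nat) : nat :=
  match i with O => x | S i' => step G (walk_node G x s i') (nth i' s 0) end.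

Lemma walk_node_cons (G : pgraph) (x r : nat) (s : list nat) (i : nat) :
  walk_node G x (r :: s) (S i) = walk_node G (step G x r) s i.
Proof. induction i; simpl; auto. Qed.

Lemma walk_node_lt_n (G : pgraph) (x : nat) (s : list nat) (i : nat) :
  wf_graph G -> x < pg_n G -> walk_node G x s i < pg_n G.
Proof. intros HG Hx. induction i; simpl; auto. apply step_lt_n; auto. Qed.

Lemma walk_hits (G : pgraph) (w : nat) (s : list nat) (x : nat) :
  ~ avoids G w x s -> exists i, i <= length s /\ walk_node G x s i = w.
Proof.
  revert x. induction s as [|r s IH]; intros x H.
  - exists 0. split; auto. simpl. destruct (Nat.eq_dec x w); auto. exfalso. apply H. split; auto.
  - destruct (Nat.eq_dec x w) as [<-|Hne]; [exists 0; split; simpl; auto; lia|].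
    destruct (IH (step G x r)) as [i [Hi E]]; [intros Ha; apply H; split; auto|].
    exists (S i). split; [simpl; lia|]. rewrite walk_node_cons. auto.
Qed.

Section Follow.
Variables (G : pgraph) (adv : list bool) (s : list nat) (v : nat).
Hypotheses (HG : wf_graph G) (Hv : v < pg_n G).

Lemma cfg_follow (i : nat) : 2 <= pg_n G -> i <= length s ->
  fst (cfg G (follow s) adv v i) = walk_node G v s i /\
  length (snd (cfg G (follow s) adv v i)) = i /\
  current_degree (pg_deg G v) (snd (cfg G (follow s) adv v i)) = pg_deg G (walk_node G v s i).
Proof.
  intros H2. induction i as [|i IH]; intros Hi; [simpl; auto|].
  destruct IH as [E1 [E2 E3]]; [lia|]. simpl cfg.
  destruct (cfg G (follow s) adv v i) as [u h]. simpl in *. subst u.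
  set (x := walk_node G v s i) in *.
  assert (Hd : 1 <= pg_deg G x) by (apply deg_pos_nontrivial, walk_node_lt_n; auto).
  unfold follow. rewrite E2, E3. destruct (Nat.ltb_spec i (length s)); [|lia].
  destruct (Nat.eqb_spec (pg_deg G x) 0); [lia|].
  assert (Hp : nth i s 0 mod pg_deg G x < pg_deg G x) by (apply Nat.mod_upper_bound; lia).
  destruct (Nat.ltb_spec (nth i s 0 mod pg_deg G x) (pg_deg G x)); [|lia].
  unfold step, nbr. destruct (Nat.eqb_spec (pg_deg G x) 0); [lia|].
  destruct (pg_nbr G x (nth i s 0 mod pg_deg G x)) as [w q]. simpl.
  split; [auto|split].
  - rewrite length_app. simpl. lia.
  - unfold current_degree. rewrite map_app. simpl. rewrite last_last. auto.
Qed.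

Lemma follow_explores :
  0 < length s -> (forall w, w < pg_n G -> ~ avoids G w v s) ->
  explores_within G (follow s) adv v (length s).
Proof.
  intros Hs Hav. destruct (le_lt_dec 2 (pg_n G)) as [H2|H1].
  - exists (length s). split; [auto|split; [|split]].
    + intros i Hi. destruct (cfg_follow i H2 ltac:(lia)) as [E1 [E2 E3]].
      assert (Hd : 1 <= pg_deg G (walk_node G v s i))
        by (apply deg_pos_nontrivial, walk_node_lt_n; auto).
      unfold follow at 1. rewrite E2, E3. destruct (Nat.ltb_spec i (length s)); [|lia].
      destruct (Nat.eqb_spec (pg_deg G (walk_node G v s i)) 0); [lia|].
      eexists. split; [reflexivity|]. rewrite E1. apply Nat.mod_upper_bound. lia.
    + destruct (cfg_follow (length s) H2 ltac:(lia)) as [_ [E2 _]].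
      unfold follow at 1. rewrite E2, Nat.ltb_irrefl. auto.
    + intros u Hu. destruct (walk_hits G u s v (Hav u Hu)) as [i [Hi E]].
      exists i. split; auto. destruct (cfg_follow i H2 Hi) as [E1 _]. congruence.
  - (* A single node has degree 0, so [follow s] stops at once. *)
    exists 0. split; [lia|]. split; [intros; lia|split].
    + simpl. unfold follow. simpl. destruct (Nat.ltb_spec 0 (length s)); [|lia].
      unfold current_degree. simpl. destruct (Nat.eqb_spec (pg_deg G v) 0); auto.
      exfalso. destruct (wf_nbr G HG v 0 Hv ltac:(lia)) as [A [_ [_ D]]]. lia.
    + intros u Hu. exists 0. split; auto. simpl. lia.
Qed.

End Follow.

(** * The upper bound *)

Section RealBounds.
Local Open Scope R_scope.

Lemma ln2_pos : 0 < ln 2.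
Proof. rewrite <- ln_1. apply ln_increasing; lra. Qed.

Lemma lg_le (x y : R) : 0 < x -> x <= y -> lg x <= lg y.
Proof.
  intros Hx [Hxy| ->]; [|lra]. unfold lg, Rdiv. apply Rmult_le_compat_r.
  - left. apply Rinv_0_lt_compat, ln2_pos.
  - left. apply ln_increasing; auto.
Qed.

Lemma lg_lt (x y : R) : 0 < x -> x < y -> lg x < lg y.
Proof.
  intros Hx Hxy. unfold lg, Rdiv. apply Rmult_lt_compat_r.
  - apply Rinv_0_lt_compat, ln2_pos.
  - apply ln_increasing; auto.
Qed.

Lemma lg_pow2 (k : nat) : lg (INR (2 ^ k)) = INR k.
Proof.
  unfold lg. rewrite pow_INR. replace (INR 2) with 2 by (simpl; lra).
  rewrite ln_pow by lra. field. apply Rgt_not_eq, ln2_pos.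
Qed.

Lemma lg_mult2 (x : R) : 0 < x -> lg (2 * x) = 1 + lg x.
Proof. intros Hx. unfold lg. rewrite ln_mult by lra. field. apply Rgt_not_eq, ln2_pos. Qed.

Lemma lg_ge_of_pow2_le (k m : nat) : (2 ^ k <= m)%nat -> INR k <= lg (INR m).
Proof.
  intros Hkm. rewrite <- lg_pow2. apply lg_le; [|apply le_INR; auto].
  apply lt_0_INR. pose proof (Nat.pow_nonzero 2 k ltac:(lia)). lia.
Qed.

Lemma pow2_le_of_lg_ge (k m : nat) : (1 <= m)%nat -> INR k <= lg (INR m) -> (2 ^ k <= m)%nat.
Proof.
  intros Hm Hk. destruct (le_lt_dec (2 ^ k) m) as [|Hlt]; auto. exfalso.
  assert (lg (INR m) < lg (INR (2 ^ k))) by (apply lg_lt; [apply lt_0_INR; lia|apply lt_INR; auto]).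
  rewrite lg_pow2 in *. lra.
Qed.

Lemma floorR_ge (z : Z) (r : R) : IZR z <= r -> (z <= floorR r)%Z.
Proof.
  intros H. unfold floorR. destruct (base_Int_part r) as [A B].
  assert (IZR z < IZR (Int_part r) + 1) by lra.
  rewrite <- plus_IZR in *. apply lt_IZR in H0. lia.
Qed.

End RealBounds.

(** Advice strings: the [i]-th binary string in length-lexicographic order,
    so that [i] costs [log2 (i + 1)] bits. *)
Fixpoint bits (l v : nat) : list bool :=
  match l with O => [] | S l' => (v mod 2 =? 1) :: bits l' (v / 2) end.

Fixpoint bits_value (l : list bool) : nat :=
  match l with [] => 0 | b :: l' => (if b then 1 else 0) + 2 * bits_value l' end.

Lemma length_bits (l v : nat) : length (bits l v) = l.
Proof. revert v. induction l; intros; simpl; auto. Qed.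

Lemma bits_valueK (l v : nat) : v < 2 ^ l -> bits_value (bits l v) = v.
Proof.
  revert v. induction l as [|l IH]; intros v Hv; [simpl in *; lia|].
  cbn [bits bits_value]. rewrite Nat.pow_succ_r' in Hv. rewrite IH by (apply Nat.Div0.div_lt_upper_bound; lia).
  pose proof (Nat.div_mod v 2 ltac:(lia)). pose proof (Nat.mod_upper_bound v 2 ltac:(lia)).
  destruct (Nat.eqb_spec (v mod 2) 1); lia.
Qed.

Definition encode (i : nat) : list bool :=
  bits (Nat.log2 (S i)) (S i - 2 ^ Nat.log2 (S i)).

Definition decode (l : list bool) : nat := 2 ^ length l - 1 + bits_value l.

Lemma encodeK (i : nat) : decode (encode i) = i.
Proof.
  unfold decode, encode. rewrite length_bits.
  pose proof (Nat.log2_spec (S i) ltac:(lia)) as [A B]. simpl in B.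
  rewrite bits_valueK by lia. lia.
Qed.

Lemma length_encode (i : nat) : length (encode i) = Nat.log2 (S i).
Proof. apply length_bits. Qed.

Definition ues (N : nat) : list nat :=
  match le_lt_dec 1 N with
  | left H => proj1_sig (constructive_indefinite_description _ (universal_sequence_exists N H))
  | right _ => []
  end.

Lemma ues_spec (N : nat) : 1 <= N -> length (ues N) = ues_length N /\
  forall G v w, wf_graph G -> pg_n G <= N -> v < pg_n G -> w < pg_n G -> ~ avoids G w v (ues N).
Proof.
  intros HN. unfold ues. destruct (le_lt_dec 1 N); [|lia].
  destruct (constructive_indefinite_description _ _) as [s Hs]. auto.
Qed.

Lemma ues_length_le (N : nat) : 1 <= N -> ues_length N <= 14 * N ^ 7.
Proof.
  intros HN. unfold ues_length, table_bits.
  assert (N <= N ^ 3) by (simpl; nia). assert (N * N <= N ^ 3) by (simpl; nia).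
  assert (1 <= N ^ 3) by (simpl; nia).
  replace (N ^ 7) with (N ^ 3 * N ^ 4) by (rewrite <- Nat.pow_add_r; auto). nia.
Qed.

Lemma ues_length_pos (N : nat) : 1 <= N -> 0 < ues_length N.
Proof. intros HN. unfold ues_length, table_bits. pose proof (Nat.pow_nonzero N 4 ltac:(lia)). nia. Qed.

Definition size_index (B n : nat) : nat := Nat.log2 (Nat.log2 n) / B.
Definition size_bound (B i : nat) : nat := 2 ^ (2 ^ ((i + 1) * B)).
Definition size_oracle (B : nat) : map_oracle := fun G => encode (size_index B (pg_n G)).
Definition size_algorithm (B : nat) : algorithm :=
  fun adv => follow (ues (size_bound B (decode adv))) adv.

Lemma le_size_bound (B n : nat) : 1 <= B -> 1 <= n -> n <= size_bound B (size_index B n).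
Proof.
  intros HB Hn. unfold size_bound, size_index.
  set (a := Nat.log2 n). set (j := Nat.log2 a).
  assert (H1 : n < 2 ^ S a) by (apply (Nat.log2_spec n); lia).
  assert (H2 : S a <= 2 ^ S j).
  { destruct (Nat.eq_dec a 0) as [->|Ha]; [pose proof (Nat.pow_nonzero 2 (S j) ltac:(lia)); lia|].
    pose proof (Nat.log2_spec a ltac:(lia)). unfold j. lia. }
  assert (H3 : S j <= (j / B + 1) * B) by (pose proof (Nat.mul_succ_div_gt j B ltac:(lia)); lia).
  assert (2 ^ S a <= 2 ^ (2 ^ ((j / B + 1) * B))).
  { apply Nat.pow_le_mono_r; [lia|]. eapply Nat.le_trans; [apply H2|]. apply Nat.pow_le_mono_r; lia. }
  lia.
Qed.

Lemma size_bound_le_pow (B n : nat) : 1 <= B -> 2 <= n -> size_bound B (size_index B n) <= n ^ (2 ^ B).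
Proof.
  intros HB Hn. unfold size_bound, size_index.
  set (a := Nat.log2 n). set (j := Nat.log2 a).
  assert (Ha : 1 <= a) by (apply Nat.log2_le_pow2; simpl; lia).
  assert (H1 : 2 ^ a <= n) by (apply (Nat.log2_spec n); lia).
  assert (H2 : 2 ^ j <= a) by (apply (Nat.log2_spec a); lia).
  assert (H3 : (j / B + 1) * B <= j + B) by (pose proof (Nat.Div0.mul_div_le j B); lia).
  assert (H4 : 2 ^ ((j / B + 1) * B) <= a * 2 ^ B).
  { eapply Nat.le_trans; [apply Nat.pow_le_mono_r; [lia|apply H3]|].
    rewrite Nat.pow_add_r. apply Nat.mul_le_mono_r. auto. }
  eapply Nat.le_trans; [apply Nat.pow_le_mono_r; [lia|apply H4]|].
  rewrite Nat.pow_mul_r. apply Nat.pow_le_mono_l. auto.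
Qed.

Lemma explores_within_ext (G : pgraph) (A A' : algorithm) (adv : list bool) (v T : nat) :
  (forall d0 h, A adv d0 h = A' adv d0 h) ->
  explores_within G A' adv v T -> explores_within G A adv v T.
Proof.
  intros HA. assert (Hcfg : forall k, cfg G A adv v k = cfg G A' adv v k).
  { induction k as [|k IH]; simpl; auto. rewrite IH. destruct (cfg G A' adv v k). rewrite HA. auto. }
  unfold explores_within. setoid_rewrite Hcfg. setoid_rewrite HA. auto.
Qed.

Lemma size_algorithm_explores (B : nat) : 1 <= B ->
  poly_explores_map (size_oracle B) (size_algorithm B).
Proof.
  intros HB. exists 14, (2 ^ B * 7). intros G v HG Hv.
  assert (Hn1 : 1 <= pg_n G) by apply HG.
  set (N := size_bound B (size_index B (pg_n G))).
  assert (HnN : pg_n G <= N) by (apply le_size_bound; auto).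
  destruct (ues_spec N ltac:(lia)) as [Hlen Hues].
  apply (explores_within_ext _ _ (follow (ues N))); [unfold size_algorithm, size_oracle;
    rewrite encodeK; auto|].
  assert (Hex : explores_within G (follow (ues N)) (size_oracle B G) v (length (ues N))).
  { apply follow_explores; [auto|auto| |intros w Hw; apply Hues; auto].
    rewrite Hlen. apply ues_length_pos. lia. }
  destruct Hex as [t [Ht Hrest]]. exists t. split; [|exact Hrest].
  destruct (le_lt_dec 2 (pg_n G)) as [H2|H1].
  - rewrite Hlen in Ht. eapply Nat.le_trans; [apply Ht|].
    eapply Nat.le_trans; [apply ues_length_le; lia|]. apply Nat.mul_le_mono_l.
    rewrite Nat.pow_mul_r. apply Nat.pow_le_mono_l. apply size_bound_le_pow; auto.
  - (* A single node has no ports, so no step is possible. *)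
    destruct t as [|t]; [lia|]. exfalso. destruct Hrest as [Hvalid _].
    destruct (Hvalid 0 ltac:(lia)) as [p [_ Hp]]. simpl in Hp.
    destruct (wf_nbr G HG v p Hv Hp) as [A [_ [_ D]]]. lia.
Qed.

Lemma length_size_advice (b n : nat) : 1 <= b -> 2 ^ (2 ^ (2 ^ b)) <= n ->
  (INR (Nat.log2 (S (size_index (2 ^ b) n))) + INR b <= 1 + lll n)%R.
Proof.
  intros Hb Hn. unfold size_index. set (B := 2 ^ b) in *.
  assert (HB : 2 <= B) by (apply (Nat.pow_le_mono_r 2 1 b); lia).
  assert (Hn0 : 0 < n) by (pose proof (Nat.pow_nonzero 2 (2 ^ B) ltac:(lia)); lia).
  set (a := Nat.log2 n). set (j := Nat.log2 a). set (i := j / B). set (l := Nat.log2 (S i)).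
  assert (Ha : 2 ^ B <= a) by (apply (Nat.log2_le_pow2 n (2 ^ B) Hn0); auto).
  assert (Ha0 : 0 < a) by (pose proof (Nat.pow_nonzero 2 B ltac:(lia)); lia).
  assert (Hj : B <= j) by (apply (Nat.log2_le_pow2 a B Ha0); auto).
  assert (H2a : 2 ^ a <= n) by (apply (Nat.log2_spec n); auto).
  assert (H2j : 2 ^ j <= a) by (apply (Nat.log2_spec a); auto).
  assert (H2l : 2 ^ l <= S i) by (apply (Nat.log2_spec (S i)); lia).
  assert (Hi : B * S i <= 2 * j) by (pose proof (Nat.Div0.mul_div_le j B); unfold i; lia).
  assert (Hlb : 2 ^ (l + b) <= 2 * j).
  { rewrite Nat.pow_add_r. fold B. eapply Nat.le_trans; [|apply Hi].
    rewrite Nat.mul_comm. apply Nat.mul_le_mono_l. auto. }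
  assert (Hj0 : (0 < INR j)%R) by (apply lt_0_INR; lia).
  assert (R1 := lg_ge_of_pow2_le _ _ Hlb).
  rewrite mult_INR, plus_INR in R1. replace (INR 2) with 2%R in R1 by (simpl; lra).
  rewrite lg_mult2 in R1 by auto.
  assert (R2 := lg_ge_of_pow2_le _ _ H2j). assert (R3 := lg_ge_of_pow2_le _ _ H2a).
  assert (R4 : (lg (INR j) <= lg (lg (INR a)))%R) by (apply lg_le; auto).
  assert (R5 : (lg (INR a) <= lg (lg (INR n)))%R) by (apply lg_le; auto; apply lt_0_INR; auto).
  assert (R6 : (lg (lg (INR a)) <= lg (lg (lg (INR n))))%R) by (apply lg_le; auto; lra).
  unfold lll. fold a. lra.
Qed.

Lemma upper_bound (c : R) : (0 < c)%R ->
  exists (f : map_oracle) (A : algorithm) (N0 : nat),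
    (forall G, wf_graph G -> N0 <= pg_n G ->
       (Z.of_nat (length (f G)) <= floorR (lll (pg_n G) - c)%R)%Z) /\
    poly_explores_map f A.
Proof.
  intros Hc. destruct (INR_archimed 1 (c + 1) ltac:(lra)) as [b Hb]. rewrite Rmult_1_r in Hb.
  assert (Hb1 : 1 <= b) by (destruct b; [simpl in Hb; lra|lia]).
  exists (size_oracle (2 ^ b)), (size_algorithm (2 ^ b)), (2 ^ (2 ^ (2 ^ b))). split.
  - intros G HG HN. unfold size_oracle. rewrite length_encode. apply floorR_ge.
    rewrite <- INR_IZR_INZ. pose proof (length_size_advice b (pg_n G) Hb1 HN). lra.
  - apply size_algorithm_explores. pose proof (Nat.pow_nonzero 2 b ltac:(lia)). lia.
Qed.

(** * The lower bound *)

Definition cycle_succ (n u : nat) : nat := if u + 1 =? n then 0 else u + 1.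
Definition cycle_pred (n u : nat) : nat := if u =? 0 then n - 1 else u - 1.

Definition cycle (n : nat) : pgraph :=
  PGraph n (fun _ => 2) (fun u p => if p =? 0 then (cycle_succ n u, 1) else (cycle_pred n u, 0)).

Ltac cycle_cases := unfold cycle_succ, cycle_pred in *; repeat match goal with
  | |- context [?a =? ?b] => destruct (Nat.eqb_spec a b)
  | H : context [?a =? ?b] |- _ => destruct (Nat.eqb_spec a b)
  end.

Lemma cycle_rt_forward (n d u : nat) : 3 <= n -> u + d < n ->
  clos_refl_trans nat (adj (cycle n)) u (u + d).
Proof.
  intros Hn. revert u. induction d as [|d IH]; intros u Hud; [rewrite Nat.add_0_r; apply rt_refl|].
  apply rt_trans with (u + 1).
  - apply rt_step. exists 0. simpl. split; [lia|]. cycle_cases; lia.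
  - replace (u + S d) with (u + 1 + d) by lia. apply IH. lia.
Qed.

Lemma cycle_wf (n : nat) : 3 <= n -> wf_graph (cycle n).
Proof.
  intros Hn. split; [|split; [|split]]; simpl.
  - lia.
  - intros u p Hu Hp. destruct (Nat.eqb_spec p 0) as [->|]; simpl.
    + cycle_cases; repeat split; try lia; f_equal; lia.
    + replace p with 1 by lia. simpl. cycle_cases; repeat split; try lia; f_equal; lia.
  - intros u p1 p2 Hu Hp1 Hp2 E.
    destruct (Nat.eqb_spec p1 0); destruct (Nat.eqb_spec p2 0); simpl in E; try lia; cycle_cases; lia.
  - intros u w Hu Hw. destruct (le_lt_dec u w).
    + replace w with (u + (w - u)) by lia. apply cycle_rt_forward; lia.
    + apply rt_trans with (n - 1); [replace (n - 1) with (u + (n - 1 - u)) by lia;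
        apply cycle_rt_forward; lia|].
      apply rt_trans with 0; [apply rt_step; exists 0; simpl; split; [lia|cycle_cases; lia]|].
      apply (cycle_rt_forward n w 0); lia.
Qed.

(** On a cycle every node looks the same, so the history does not depend on the
    size of the cycle nor on the start node. *)
Fixpoint cycle_history (A : algorithm) (adv : list bool) (k : nat) : history :=
  match k with
  | O => []
  | S k' => let h := cycle_history A adv k' in
            match A adv 2 h with
            | Some p => if p <? 2 then h ++ [(p, if p =? 0 then 1 else 0, 2)] else h
            | None => h
            end
  end.

Lemma cfg_cycle (n : nat) (A : algorithm) (adv : list bool) (v k : nat) :
  snd (cfg (cycle n) A adv v k) = cycle_history A adv k.
Proof.
  induction k as [|k IH]; simpl; auto. destruct (cfg (cycle n) A adv v k) as [u h]. simpl in *. subst.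
  destruct (A adv 2 (cycle_history A adv k)) as [p|]; auto.
  destruct (p <? 2); auto. destruct (p =? 0); auto.
Qed.

(** An algorithm exploring the cycles of sizes [n] and [m] within [T n] steps
    with the same advice stops on both at the same time, so [m <= T n + 1]. *)
Lemma cycle_advice_eq_le (f : instance_oracle) (A : algorithm) (C k : nat) :
  (forall G v, wf_graph G -> v < pg_n G -> explores_within G A (f G v) v (C * pg_n G ^ k)) ->
  forall n m, 3 <= n -> 3 <= m -> f (cycle n) 0 = f (cycle m) 0 -> m <= C * n ^ k + 1.
Proof.
  intros Hpe n m Hn Hm E.
  destruct (Hpe (cycle n) 0 (cycle_wf n Hn) ltac:(simpl; lia)) as [tn [Htn [_ [Hsn _]]]].
  destruct (Hpe (cycle m) 0 (cycle_wf m Hm) ltac:(simpl; lia)) as [tm [_ [Hvm [_ Hcm]]]].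
  simpl pg_n in *. simpl pg_deg in *. rewrite cfg_cycle in Hsn.
  assert (Hle : tm <= tn).
  { destruct (le_lt_dec tm tn) as [|Hlt]; auto.
    destruct (Hvm tn Hlt) as [p [Ep _]]. rewrite cfg_cycle, <- E in Ep. congruence. }
  assert (m <= S tm) by (apply (surjective_on_le m tm (fun i => fst (cfg (cycle m) A (f (cycle m) 0) 0 i))); auto).
  lia.
Qed.

Fixpoint bool_lists_of_length (k : nat) : list (list bool) :=
  match k with
  | O => [[]]
  | S k' => map (cons true) (bool_lists_of_length k') ++ map (cons false) (bool_lists_of_length k')
  end.

Lemma length_bool_lists_of_length (k : nat) : length (bool_lists_of_length k) = 2 ^ k.
Proof. induction k as [|k IH]; simpl; auto. rewrite length_app, !length_map. lia. Qed.

Lemma in_bool_lists_of_length (l : list bool) : In l (bool_lists_of_length (length l)).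
Proof.
  induction l as [|b l IH]; simpl; auto. apply in_or_app.
  destruct b; [left|right]; apply in_map; auto.
Qed.

Lemma NoDup_bool_lists_le (L : list (list bool)) (m : nat) :
  NoDup L -> (forall x, In x L -> length x <= m) -> length L <= 2 ^ S m.
Proof.
  intros HL Hm.
  set (all := flat_map bool_lists_of_length (seq 0 (S m))).
  assert (Hincl : length L <= length all).
  { apply NoDup_incl_length; auto. intros x Hx. apply in_flat_map. exists (length x).
    split; [apply in_seq; specialize (Hm x Hx); lia|apply in_bool_lists_of_length]. }
  assert (Hall : length all < 2 ^ S m).
  { unfold all. clear. induction m as [|m IH]; [simpl; auto|].
    rewrite seq_S, flat_map_app, length_app. cbn [flat_map].
    rewrite app_nil_r, length_bool_lists_of_length, Nat.add_0_l, (Nat.pow_succ_r' 2 (S m)). lia. }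
  lia.
Qed.

Definition tower (s e j : nat) : nat := 2 ^ (2 ^ (s + e * j)).

Lemma lll_tower (x : nat) : lll (2 ^ (2 ^ x)) = lg (INR x).
Proof. unfold lll. rewrite !lg_pow2. auto. Qed.

Lemma lt_tower (s e j : nat) : s < tower s e j.
Proof.
  unfold tower. pose proof (Nat.pow_gt_lin_r 2 s ltac:(lia)).
  pose proof (Nat.pow_gt_lin_r 2 (2 ^ s) ltac:(lia)).
  assert (2 ^ (2 ^ s) <= 2 ^ (2 ^ (s + e * j)))
    by (apply Nat.pow_le_mono_r; [lia|]; apply Nat.pow_le_mono_r; lia).
  lia.
Qed.

(** Cycles of tower sizes are so far apart that a polynomial-time algorithm
    cannot serve two of them with the same advice. *)
Lemma tower_advice_distinct (f : instance_oracle) (A : algorithm) (C k s e : nat) :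
  (forall G v, wf_graph G -> v < pg_n G -> explores_within G A (f G v) v (C * pg_n G ^ k)) ->
  C + 3 <= s -> k < e -> forall j1 j2, j1 < j2 ->
  f (cycle (tower s e j1)) 0 <> f (cycle (tower s e j2)) 0.
Proof.
  intros Hpe Hs Hke j1 j2 Hj E.
  pose proof (lt_tower s e j1). pose proof (lt_tower s e j2).
  assert (Hle := cycle_advice_eq_le f A C k Hpe (tower s e j1) (tower s e j2)
                   ltac:(lia) ltac:(lia) E).
  assert (Hge : tower s e j1 ^ (2 ^ e) <= tower s e j2).
  { unfold tower. rewrite <- Nat.pow_mul_r, <- Nat.pow_add_r.
    apply Nat.pow_le_mono_r; [lia|]. apply Nat.pow_le_mono_r; nia. }
  assert (He : e < 2 ^ e) by (apply Nat.pow_gt_lin_r; lia).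
  assert (Hge2 : tower s e j1 ^ (k + 1) <= tower s e j1 ^ (2 ^ e))
    by (apply Nat.pow_le_mono_r; lia).
  rewrite Nat.pow_add_r, Nat.pow_1_r in Hge2.
  assert (1 <= tower s e j1 ^ k) by (pose proof (Nat.pow_nonzero (tower s e j1) k ltac:(lia)); lia).
  nia.
Qed.

(** [s + 1] distinct advice strings of length at most [log2 ((e + 1) s) - (e + 2)]
    cannot exist: there are fewer than [2 * (e + 1) s / 2 ^ (e + 1) <= s] of them. *)
Lemma few_short_advice_strings (adv : nat -> list bool) (s e : nat) : 1 <= s ->
  (forall j1 j2, j1 < j2 <= s -> adv j1 <> adv j2) ->
  (forall j, j <= s -> 2 ^ (length (adv j) + (e + 2)) <= s + e * s) -> False.
Proof.
  intros Hs Hdist Hlen.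
  assert (Hlog : forall j, j <= s -> length (adv j) + (e + 2) <= Nat.log2 (s + e * s))
    by (intros j Hj; apply Nat.log2_le_pow2; [lia|auto]).
  assert (Hnodup : NoDup (map adv (seq 0 (S s)))).
  { apply FinFun.Injective_map_NoDup_in; [|apply seq_NoDup].
    intros x y Hx%in_seq Hy%in_seq E. destruct (lt_eq_lt_dec x y) as [[Hlt|]|Hgt]; auto; exfalso.
    - apply (Hdist x y); [lia|auto].
    - apply (Hdist y x); [lia|auto]. }
  assert (Hcount : S s <= 2 ^ S (Nat.log2 (s + e * s) - (e + 2))).
  { rewrite <- (length_seq (S s) 0), <- (length_map adv). apply NoDup_bool_lists_le; auto.
    intros x [j [<- Hj%in_seq]]%in_map_iff. specialize (Hlog j ltac:(lia)). lia. }
  pose proof (Hlog 0 ltac:(lia)).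
  assert (HX : 2 ^ Nat.log2 (s + e * s) <= s + e * s) by (apply Nat.log2_spec; lia).
  assert (Hsplit : 2 ^ S (Nat.log2 (s + e * s) - (e + 2)) * 2 ^ (e + 1) = 2 ^ Nat.log2 (s + e * s))
    by (rewrite <- Nat.pow_add_r; f_equal; lia).
  assert (He : 2 * (e + 1) <= 2 ^ (e + 1)).
  { rewrite Nat.pow_add_r. pose proof (Nat.pow_gt_lin_r 2 e ltac:(lia)). simpl. lia. }
  assert (S s * (2 * (e + 1)) <= s + e * s)
    by (eapply Nat.le_trans; [apply Nat.mul_le_mono; [apply Hcount|apply He]|]; lia).
  nia.
Qed.

Lemma tower_advice_short (f : instance_oracle) (phi : nat -> nat) (N0 NP P s e j : nat) :
  (forall G v, wf_graph G -> v < pg_n G -> N0 <= pg_n G ->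
     (INR (length (f G v)) <= lll (pg_n G) - INR (phi (pg_n G)))%R) ->
  (forall n, NP <= n -> P <= phi n) -> N0 + NP + 3 <= s ->
  2 ^ (length (f (cycle (tower s e j)) 0) + P) <= s + e * j.
Proof.
  intros HN0 HNP Hs. pose proof (lt_tower s e j) as Hlt.
  specialize (HN0 (cycle (tower s e j)) 0 (cycle_wf (tower s e j) ltac:(lia))
                ltac:(simpl; lia) ltac:(simpl; lia)).
  simpl pg_n in HN0. unfold tower in HN0 at 2 3. rewrite lll_tower in HN0.
  assert (HP : P <= phi (tower s e j)) by (apply HNP; lia). apply le_INR in HP.
  apply pow2_le_of_lg_ge; [lia|]. rewrite plus_INR. unfold tower in *. lra.
Qed.

Lemma lower_bound_instance (phi : nat -> nat) : tends_to_infty phi ->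
  forall (f : instance_oracle) (A : algorithm),
    (exists N0, forall G v, wf_graph G -> v < pg_n G -> N0 <= pg_n G ->
       (INR (length (f G v)) <= lll (pg_n G) - INR (phi (pg_n G)))%R) ->
    ~ poly_explores_inst f A.
Proof.
  intros Hphi f A [N0 HN0] [C [k Hpe]].
  destruct (Hphi (k + 3)) as [NP HNP].
  apply (few_short_advice_strings (fun j => f (cycle (tower (N0 + NP + C + 3) (k + 1) j)) 0)
           (N0 + NP + C + 3) (k + 1)); [lia| |].
  - intros j1 j2 Hj. apply (tower_advice_distinct f A C k); auto; lia.
  - intros j Hj. eapply Nat.le_trans.
    + replace (k + 1 + 2) with (k + 3) by lia. apply (tower_advice_short f phi N0 NP); auto; lia.
    + nia.
Qed.

Lemma lower_bound_map (phi : nat -> nat) : tends_to_infty phi ->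
  forall (f : map_oracle) (A : algorithm),
    (exists N0, forall G, wf_graph G -> N0 <= pg_n G ->
       (INR (length (f G)) <= lll (pg_n G) - INR (phi (pg_n G)))%R) ->
    ~ poly_explores_map f A.
Proof.
  intros Hphi f A [N0 HN0] [C [k Hpe]].
  apply (lower_bound_instance phi Hphi (fun G _ => f G) A).
  - exists N0. intros. apply HN0; auto.
  - exists C, k. intros. apply Hpe; auto.
Qed.

Theorem mainTheorem3 :
  (forall c : R, (0 < c)%R ->
     exists (f : map_oracle) (A : algorithm) (N0 : nat),
       (forall G, wf_graph G -> N0 <= pg_n G ->
          (Z.of_nat (length (f G)) <= floorR (lll (pg_n G) - c)%R)%Z) /\
       poly_explores_map f A) /\
  (forall phi : nat -> nat, tends_to_infty phi ->
     forall (f : instance_oracle) (A : algorithm),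
       (exists N0, forall G v, wf_graph G -> v < pg_n G -> N0 <= pg_n G ->
          (INR (length (f G v)) <= lll (pg_n G) - INR (phi (pg_n G)))%R) ->
       ~ poly_explores_inst f A) /\
  (forall phi : nat -> nat, tends_to_infty phi ->
     forall (f : map_oracle) (A : algorithm),
       (exists N0, forall G, wf_graph G -> N0 <= pg_n G ->
          (INR (length (f G)) <= lll (pg_n G) - INR (phi (pg_n G)))%R) ->
       ~ poly_explores_map f A).
Proof.
  split; [exact upper_bound|split; [exact lower_bound_instance|exact lower_bound_map]].
Qed.
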